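(* Let $n\ge 2$, $m\ge 2$, and let $\mathcal{A}=(a_{i_1\ldots i_m})\in S_{m,n+1}$ be a regularly decomposable tensor. Then $\mathcal{A}$ can be written as $$\mathcal{A}=\sum_{k=1}^r \alpha_k\left(\mathbf{v}^{(k)}\right)^{\otimes m},$$ where $\alpha_k>0$ and $\mathbf{v}^{(k)}=(1,v^{(k)}_1,\ldots,v^{(k)}_n)^\top\in\mathbb{R}^{n+1}$ with $\sum_{i=1}^n\left(v^{(k)}_i\right)^2=1$ for $k=1,\ldots,r$. Furthermore, $$a_{00i_3\ldots i_m}=\sum_{i=1}^n a_{ii\,i_3\ldots i_m}$$ for all $i_3,\ldots,i_m\in\{0,1,\ldots,n\}$.
   Context: Vectors in $\mathbb{R}^{n+1}$ are indexed $\mathbf{x}=(x_0,x_1,\ldots,x_n)^\top$, with $n\ge 2$. $S_{m,n+1}$ denotes the space of real symmetric tensors $\mathcal{A}=(a_{i_1\ldots i_m})$ of order $m$ and dimension $n+1$ (indices in $\{0,\ldots,n\}$, entries invariant under permutations of indices). For $\mathbf{u}\in\mathbb{R}^{n+1}$, $\mathbf{u}^{\otimes m}$ is the tensor with entries $u_{i_1}\cdots u_{i_m}$. A vector $\mathbf{x}\in\mathbb{R}^{n+1}$ is regular if $x_0\neq 0$ and $x_0^2=x_1^2+\cdots+x_n^2$. For $\mathcal{A}\in S_{m,n+1}$, its $i$th row tensor is $\mathcal{A}_i=(a_{i i_2\ldots i_m})\in S_{m-1,n+1}$, $i=0,\ldots,n$. Regularly decomposable tensors: (i) if $m=2l$ is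 even, $\mathcal{A}\in S_{m,n+1}$ is regularly decomposable if $\mathcal{A}=\sum_{k=1}^r(\mathbf{u}^{(k)})^{\otimes m}$ for some regular vectors $\mathbf{u}^{(1)},\ldots,\mathbf{u}^{(r)}$; (ii) if $m=2l+1$ is odd, $\mathcal{A}\in S_{m,n+1}$ is regularly decomposable if its row tensor $\mathcal{A}_0\in S_{2l,n+1}$ has a decomposition $\mathcal{A}_0=\sum_{k=1}^r(\mathbf{u}^{(k)})^{\otimes 2l}$ with regular vectors $\mathbf{u}^{(k)}=(u^{(k)}_0,\ldots,u^{(k)}_n)^\top$, and the other row tensors satisfy $\mathcal{A}_i=\sum_{k=1}^r\frac{u^{(k)}_i}{u^{(k)}_0}(\mathbf{u}^{(k)})^{\otimes 2l}$ for $i=1,\ldots,n$. *)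

From HB Require Import structures.
From mathcomp Require Import all_boot all_order all_algebra perm.
Set Implicit Arguments. Unset Strict Implicit. Unset Printing Implicit Defensive.
Import Order.TTheory GRing.Theory Num.Theory.
Local Open Scope ring_scope.

(* Indices range over 'I_n.+1 = {0,...,n}; index 0 is ord0, index i (1<=i<=n)
   is lift ord0 i' for i' : 'I_n. *)

Notation tensor R m n := {ffun m.-tuple 'I_n.+1 -> R}.

Definition vec (R : realFieldType) (n : nat) := 'I_n.+1 -> R.

Definition symmetric_tensor (R : realFieldType) m n (A : tensor R m n) : Prop :=
  forall (s : 'S_m) (t : m.-tuple 'I_n.+1),
    A [tuple tnth t (s j) | j < m] = A t.

Definition tpow (R : realFieldType) (m n : nat) (u : vec R n) : tensor R m n :=
  [ffun t : m.-tuple 'I_n.+1 => \prod_(j < m) u (tnth t j)].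

Definition tscale (R : realFieldType) m n (c : R) (A : tensor R m n) : tensor R m n :=
  [ffun t => c * A t].

Definition regular (R : realFieldType) n (u : vec R n) : Prop :=
  u ord0 != 0 /\ u ord0 ^+ 2 = \sum_(i < n) u (lift ord0 i) ^+ 2.

(* the m-tuple with entries given by the sequence s (used only with size s = m) *)
Definition mkidx (m n : nat) (s : seq 'I_n.+1) : m.-tuple 'I_n.+1 :=
  insubd (nseq_tuple m ord0) s.

Definition row_tensor (R : realFieldType) m n (A : tensor R m n) (i : 'I_n.+1)
  : tensor R m.-1 n :=
  [ffun t : m.-1.-tuple 'I_n.+1 => A (mkidx m (i :: val t))].

Definition regularly_decomposable (R : realFieldType) m n (A : tensor R m n)
  : Prop :=
  if ~~ odd m then
    exists r (u : 'I_r -> vec R n),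
      (forall k, regular (u k)) /\ A = \sum_(k < r) tpow m (u k)
  else
    (* m = 2l+1, so m.-1 = 2l *)
    exists r (u : 'I_r -> vec R n),
      (forall k, regular (u k)) /\
      row_tensor A ord0 = \sum_(k < r) tpow m.-1 (u k) /\
      (forall i : 'I_n,
         row_tensor A (lift ord0 i)
         = \sum_(k < r) tscale (u k (lift ord0 i) / u k ord0) (tpow m.-1 (u k))).

From mathcomp Require Import all_boot all_order all_algebra.
Set Implicit Arguments. Unset Strict Implicit. Unset Printing Implicit Defensive.
Import Order.TTheory GRing.Theory Num.Theory.
Local Open Scope ring_scope.

(* Dividing a regular vector u by u_0 puts it on the affine sphere
   {v_0 = 1, v_1^2 + ... + v_n^2 = 1}, and u^(x)m = u_0^m v^(x)m.  In the even
   case u_0^m > 0 directly; in the odd case the rows of A are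
   sum_k (v_k)_i u_k^(x)(m-1) = sum_k u_{k,0}^(m-1) (v_k)_i v_k^(x)(m-1), which are
   the rows of sum_k u_{k,0}^(m-1) v_k^(x)m, and m - 1 is even.  The trace
   identity is linear in A and holds for u^(x)m whenever u_0^2 = u_1^2 + ... + u_n^2. *)

Lemma mkidxK m n (s : seq 'I_n.+1) : size s = m -> val (mkidx m s) = s.
Proof. by move=> h; rewrite /mkidx val_insubd h eqxx. Qed.

Section Tensors.

Variables (R : realFieldType) (n : nat).
Implicit Types (u v : vec R n) (c : R).

Definition normalize u : vec R n := fun i => u i / u ord0.

Definition normalized_decomposition m (A : tensor R m n) : Prop :=
  exists r (alpha : 'I_r -> R) (v : 'I_r -> vec R n),
    (forall k, 0 < alpha k) /\
    (forall k, v k ord0 = 1) /\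
    (forall k, \sum_(i < n) v k (lift ord0 i) ^+ 2 = 1) /\
    A = \sum_(k < r) tscale (alpha k) (tpow m (v k)).

Definition lorentz_traceless m (A : tensor R m n) : Prop :=
  forall t : (m - 2).-tuple 'I_n.+1,
    A (mkidx m [:: ord0, ord0 & val t])
    = \sum_(i < n) A (mkidx m [:: lift ord0 i, lift ord0 i & val t]).

Lemma tpowE m u (t : m.-tuple 'I_n.+1) : tpow m u t = \prod_(x <- t) u x.
Proof. by rewrite ffunE big_tuple. Qed.

Lemma tscale1 m (A : tensor R m n) : tscale 1 A = A.
Proof. by apply/ffunP => t; rewrite ffunE mul1r. Qed.

Lemma tscaleA m c1 c2 (A : tensor R m n) :
  tscale c1 (tscale c2 A) = tscale (c1 * c2) A.
Proof. by apply/ffunP => t; rewrite !ffunE mulrA. Qed.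

Lemma tpowZ m c u : tpow m (fun i => c * u i) = tscale (c ^+ m) (tpow m u).
Proof.
by apply/ffunP => t; rewrite !ffunE big_split /= prodr_const card_ord.
Qed.

Lemma normalize0 u : u ord0 != 0 -> normalize u ord0 = 1.
Proof. exact: divff. Qed.

Lemma normalize_sphere u :
  regular u -> \sum_(i < n) normalize u (lift ord0 i) ^+ 2 = 1.
Proof.
case=> nz0 cone; under eq_bigr do rewrite expr_div_n.
by rewrite -mulr_suml -cone divff // expf_neq0.
Qed.

Lemma tpow_normalize m u :
  u ord0 != 0 -> tpow m u = tscale (u ord0 ^+ m) (tpow m (normalize u)).
Proof.
move=> nz0; rewrite -tpowZ; apply/ffunP => t; rewrite !ffunE.
by apply: eq_bigr => j _; rewrite /normalize mulrC divfK.
Qed.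

Lemma row_tensor_cons m (A : tensor R m.+1 n) (t : m.+1.-tuple 'I_n.+1) :
  A t = row_tensor A (thead t) (behead_tuple t).
Proof.
rewrite ffunE; congr (A _); apply: val_inj.
by rewrite mkidxK ?size_behead ?size_tuple //= {1}(tuple_eta t).
Qed.

Lemma tensor_eq_rows m (A B : tensor R m.+1 n) :
  (forall i, row_tensor A i = row_tensor B i) -> A = B.
Proof. by move=> eqAB; apply/ffunP => t; rewrite !row_tensor_cons eqAB. Qed.

Lemma row_tensor_lincomb m r (c : 'I_r -> R) (B : 'I_r -> tensor R m n) i :
  row_tensor (\sum_(k < r) tscale (c k) (B k)) i
  = \sum_(k < r) tscale (c k) (row_tensor (B k) i).
Proof.
apply/ffunP => t; rewrite ffunE !sum_ffunE.
by apply: eq_bigr => k _; rewrite !ffunE.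
Qed.

Lemma row_tensor_tpow m u i :
  row_tensor (tpow m.+1 u) i = tscale (u i) (tpow m u).
Proof.
apply/ffunP => t; rewrite ffunE [RHS]ffunE !tpowE mkidxK ?size_tuple //.
by rewrite big_cons.
Qed.

Lemma lorentz_traceless_tpow m u :
  (2 <= m)%N -> u ord0 ^+ 2 = \sum_(i < n) u (lift ord0 i) ^+ 2 ->
  lorentz_traceless (tpow m u).
Proof.
move=> hm cone t; have sz (a b : 'I_n.+1) : size [:: a, b & val t] = m.
  by rewrite /= size_tuple -addn2 subnK.
rewrite tpowE mkidxK // !big_cons mulrA -expr2 cone mulr_suml.
by apply: eq_bigr => i _; rewrite tpowE mkidxK // !big_cons mulrA expr2.
Qed.

Lemma lorentz_traceless_lincomb m r (c : 'I_r -> R) (B : 'I_r -> tensor R m n) :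
  (forall k, lorentz_traceless (B k)) ->
  lorentz_traceless (\sum_(k < r) tscale (c k) (B k)).
Proof.
move=> trB t; rewrite sum_ffunE.
under [RHS]eq_bigr do rewrite sum_ffunE.
rewrite exchange_big /=; apply: eq_bigr => k _.
by rewrite ffunE trB mulr_sumr; apply: eq_bigr => i _; rewrite ffunE.
Qed.

Lemma regular_normalized_decomposition m (A : tensor R m n) e r
    (u : 'I_r -> vec R n) :
  ~~ odd e -> (forall k, regular (u k)) ->
  A = \sum_(k < r) tscale (u k ord0 ^+ e) (tpow m (normalize (u k))) ->
  normalized_decomposition A.
Proof.
move=> even_e reg decA.
have nz0 k : u k ord0 != 0 by case: (reg k).
exists r, (fun k => u k ord0 ^+ e), (fun k => normalize (u k)).
split; [|split; [|split]] => // k.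
- by rewrite exprn_even_gt0 // nz0 orbT.
- exact: normalize0.
- exact: normalize_sphere.
Qed.

Lemma sum_tpow_normalize m r (u : 'I_r -> vec R n) :
  (forall k, regular (u k)) ->
  \sum_(k < r) tpow m (u k)
  = \sum_(k < r) tscale (u k ord0 ^+ m) (tpow m (normalize (u k))).
Proof. by move=> reg; apply: eq_bigr => k _; apply: tpow_normalize; case: (reg k). Qed.

Lemma rows_normalize m (A : tensor R m.+1 n) r (u : 'I_r -> vec R n) :
  (forall k, regular (u k)) ->
  row_tensor A ord0 = \sum_(k < r) tpow m (u k) ->
  (forall i : 'I_n, row_tensor A (lift ord0 i)
     = \sum_(k < r) tscale (u k (lift ord0 i) / u k ord0) (tpow m (u k))) ->
  A = \sum_(k < r) tscale (u k ord0 ^+ m) (tpow m.+1 (normalize (u k))).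
Proof.
move=> reg row0 rowS.
have nz0 k : u k ord0 != 0 by case: (reg k).
have rows i : row_tensor A i
    = \sum_(k < r) tscale (normalize (u k) i) (tpow m (u k)).
  case: (unliftP ord0 i) => [j ->|->]; first exact: rowS.
  by rewrite row0; apply: eq_bigr => k _; rewrite normalize0 ?tscale1.
apply: tensor_eq_rows => i; rewrite rows row_tensor_lincomb.
apply: eq_bigr => k _.
by rewrite row_tensor_tpow (tpow_normalize m (nz0 k)) !tscaleA mulrC.
Qed.

End Tensors.

Theorem theorem2p4 (R : realFieldType) (n m : nat) (hn : (2 <= n)%N) (hm : (2 <= m)%N)
  (A : tensor R m n) (hsym : symmetric_tensor A) (hA : regularly_decomposable A) :
  (exists r (alpha : 'I_r -> R) (v : 'I_r -> vec R n),
     (forall k, 0 < alpha k) /\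
     (forall k, v k ord0 = 1) /\
     (forall k, \sum_(i < n) v k (lift ord0 i) ^+ 2 = 1) /\
     A = \sum_(k < r) tscale (alpha k) (tpow m (v k))) /\
  (forall t : (m - 2).-tuple 'I_n.+1,
     A (mkidx m [:: ord0, ord0 & val t])
     = \sum_(i < n) A (mkidx m [:: lift ord0 i, lift ord0 i & val t])).
Proof.
have decA : normalized_decomposition A.
  move: hA; rewrite /regularly_decomposable; case: ifPn => parity [r [u [reg]]].
  - by rewrite (sum_tpow_normalize m reg); apply: regular_normalized_decomposition.
  - case: m hm A {hsym} parity => // m' _ A; rewrite /= negbK => even_m' [row0 rowS].
    exact: regular_normalized_decomposition even_m' reg (rows_normalize reg row0 rowS).
have trA : lorentz_traceless A.
  case: decA => r [alpha [v [_ [v0 [sphere ->]]]]].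
  apply: lorentz_traceless_lincomb => k.
  by apply: lorentz_traceless_tpow => //; rewrite v0 sphere expr1n.
by split.
Qed.
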